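(* Let $X$ be a set, $\mathcal C\subseteq\mathcal P(X)$ closed under intersections (if $(K_i)_{i\in I}\subseteq\mathcal C$ then $\bigcap_{i\in I}K_i\in\mathcal C$), and $T:\mathcal C\to\mathcal C$ an order reversing quasi involution on $\mathcal C$. Fix $M_0\in\mathcal C$ and let $\mathcal C_0=\{K\cap M_0: K\in\mathcal C\}$. Then $\mathcal C_0\subseteq\mathcal C$, and the map $S:\mathcal C_0\to\mathcal C_0$ defined by $SK=TK\cap M_0$ is an order reversing quasi involution on $\mathcal C_0$.
   Context: $\mathcal P(X)$ is the power set of $X$. For $\mathcal D\subseteq\mathcal P(X)$, a map $T:\mathcal D\to\mathcal D$ is an order reversing quasi involution on $\mathcal D$ if for all $K,L\in\mathcal D$: (i) $K\subseteq TTK$, and (ii) $L\subseteq K$ implies $TK\subseteq TL$. *)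

From mathcomp Require Import all_boot.
From mathcomp Require Import classical_sets.
Set Implicit Arguments. Unset Strict Implicit. Unset Printing Implicit Defensive.
Local Open Scope classical_set_scope.

Definition closed_under_intersections (X : Type) (C : set (set X)) : Prop :=
  forall (I : Type) (F : I -> set X),
    (forall i, C (F i)) -> C (\bigcap_(i in [set: I]) F i).

Definition maps_into (X : Type) (D : set (set X)) (T : set X -> set X) : Prop :=
  forall K, D K -> D (T K).

Definition order_reversing_quasi_involution (X : Type) (D : set (set X))
    (T : set X -> set X) : Prop :=
  maps_into D T /\
  (forall K, D K -> K `<=` T (T K)) /\
  (forall K L, D K -> D L -> L `<=` K -> T K `<=` T L).

(** Intersecting with [M0] keeps us inside [C], so [S] maps [C0] into itself.
For [K = K' `&` M0] we have [K `<=` M0], and since [S K `<=` T K] the order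
reversal of [T] gives [T (T K) `<=` T (S K)], whence [K `<=` T (T K) `&` M0 `<=` S (S K)]. *)

From mathcomp Require Import all_boot.
From mathcomp Require Import classical_sets.
Local Open Scope classical_set_scope.

Section IntersectionClosed.
Variables (X : Type) (C : set (set X)).
Hypothesis hC : closed_under_intersections C.

Lemma closed_under_intersections_setT : C setT.
Proof.
have := @hC void (fun v => match v with end) (fun v => match v with end).
by congr C; apply/seteqP; split=> // x _ [].
Qed.

Lemma closed_under_intersections_setI (A B : set X) : C A -> C B -> C (A `&` B).
Proof.
move=> CA CB; rewrite -bigcap2E; apply: hC => -[|[|i]] //=.
exact: closed_under_intersections_setT.
Qed.

End IntersectionClosed.

Section Trace.
Variables (X : Type) (C : set (set X)) (T : set X -> set X) (M0 : set X).
Hypotheses (hC : closed_under_intersections C) (hM0 : C M0).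
Hypothesis hT : order_reversing_quasi_involution C T.

Let C0 := [set K `&` M0 | K in C].
Let S := fun K : set X => T K `&` M0.

Lemma trace_sub : C0 `<=` C.
Proof. by move=> _ [K CK <-]; exact: closed_under_intersections_setI. Qed.

Lemma trace_sub_M0 {K} : C0 K -> K `<=` M0.
Proof. by move=> [K' _ <-] x []. Qed.

Lemma trace_maps_into : maps_into C0 S.
Proof. by move=> K /trace_sub CK; exists (T K) => //; exact: hT.1. Qed.

Lemma trace_quasi_involutive K : C0 K -> K `<=` S (S K).
Proof.
case: hT => T_into [TT_ge T_rev] C0K.
have /trace_sub CK := C0K.
have CSK : C (S K) by apply: closed_under_intersections_setI => //; exact: T_into.
have TTK_sub_TSK : T (T K) `<=` T (S K) by apply: T_rev => //; [exact: T_into | exact: subIsetl].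
move=> x Kx; split; last exact: trace_sub_M0 C0K _ Kx.
exact/TTK_sub_TSK/TT_ge.
Qed.

Lemma trace_order_reversing K L : C0 K -> C0 L -> L `<=` K -> S K `<=` S L.
Proof.
move=> /trace_sub CK /trace_sub CL LK; apply: setSI.
exact: hT.2.2.
Qed.

End Trace.

Theorem proposition8p13 (X : Type) (C : set (set X)) (T : set X -> set X)
  (hC : closed_under_intersections C)
  (hT : order_reversing_quasi_involution C T)
  (M0 : set X) (hM0 : C M0) :
  let C0 := [set K `&` M0 | K in C] in
  let S := fun K : set X => T K `&` M0 in
  C0 `<=` C /\ order_reversing_quasi_involution C0 S.
Proof.
split; first exact: trace_sub.
split; first exact: trace_maps_into.
split; first exact: trace_quasi_involutive.
exact: trace_order_reversing.
Qed.
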